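(* Fix integers $s,t\geq 2$ and a subset $W=\{w_1,w_2,\ldots,w_k\}$ of $\{s+1,s+2,\ldots,st\}$ with $w_1<w_2<\cdots<w_k$. Let $I=\{i_1,\ldots,i_k\}$ with $i_1<\cdots<i_k$ be a set of integers satisfying $w_\ell-s+\ell\leq i_\ell\leq w_\ell-1$ for all $\ell\in[k]$. Define the permutation $\mu=\mu_W(I)=\mu_1\mu_2\cdots\mu_{st}$ of $[st]$ by setting $\mu_{i_\ell}=w_\ell$ for each $\ell\in[k]$ and placing the elements of $[st]\setminus W$ in increasing order in the remaining positions. Then $\mu_W(I)$ is a $321$-avoiding linear extension of $K_{s,t}^\alpha$ whose right-to-left minima are precisely the elements of $[st]\setminus W$.
   Context: $K^\alpha_{s,t}$ is the poset on $[st]$ obtained from the comb $K_{s,t}$ (elements $e_{i,j}$, $1\le i\le s$, $1\le j\le t$, covers $e_{i,1}\lessdot e_{i+1,1}$ and $e_{i,j}\lessdot e_{i,j+1}$) by labeling $e_{i,j}$ with $(j-1)s+i$; equivalently its order is generated by $i\lessdot i+1$ for $1\le i\le s-1$ and $i\lessdot i+s$ for $1\le i\le st-s$. A linear extension is a permutation of $[st]$ in which $x$ precedes $y$ whenever $x<y$ in the poset. An entry $\pi_i$ of a permutation is a right-to-left minimum if $\pi_i<\pi_j$ for all $j>i$. *)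

From mathcomp Require Import all_boot.
Set Implicit Arguments. Unset Strict Implicit. Unset Printing Implicit Defensive.

(* Permutations of [n] = {1,...,n} are represented in one-line notation as
   sequences pi = [:: pi_1; ...; pi_n]; the entry pi_i (1-indexed) is
   nth 0 pi (i-1). *)

Definition is_perm_of (n : nat) (pi : seq nat) : bool := perm_eq pi (iota 1 n).

Definition Kcover (s t x y : nat) : bool :=
  ((1 <= x <= s - 1) && (y == x + 1)) || ((1 <= x <= s * t - s) && (y == x + s)).

Inductive Klt (s t : nat) : nat -> nat -> Prop :=
| Klt_cover x y : Kcover s t x y -> Klt s t x y
| Klt_trans x y z : Klt s t x y -> Klt s t y z -> Klt s t x z.

Definition linear_extension (s t : nat) (pi : seq nat) : Prop :=
  is_perm_of (s * t) pi /\
  forall x y, Klt s t x y -> index x pi < index y pi.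

Definition avoids321 (pi : seq nat) : Prop :=
  forall i j k, i < j -> j < k -> k < size pi ->
    ~ (nth 0 pi j < nth 0 pi i /\ nth 0 pi k < nth 0 pi j).

Definition rl_min (pi : seq nat) (x : nat) : Prop :=
  exists i, i < size pi /\ nth 0 pi i = x /\
    forall j, i < j -> j < size pi -> x < nth 0 pi j.

Fixpoint mu_fill (W I : seq nat) (ps c : seq nat) : seq nat :=
  match ps with
  | [::] => [::]
  | p :: ps' =>
      if p \in I then nth 0 W (index p I) :: mu_fill W I ps' c
      else head 0 c :: mu_fill W I ps' (behead c)
  end.

Definition muW (s t : nat) (W I : seq nat) : seq nat :=
  mu_fill W I (iota 1 (s * t)) [seq x <- iota 1 (s * t) | x \notin W].

From mathcomp Require Import all_boot zify.

(* mu_W(I) shuffles two increasing sequences: W sits on the positions I and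
   the complement C = [st] \ W fills the remaining positions in order, so any
   three entries contain two of the same class and mu avoids 321.  Within each
   class the rank of a position equals the rank of its value (the r-th position
   outside I carries the r-th element of C).  Comparing these ranks with the
   total counts, i_l < w_l forces every value below an element c of C to occur
   before c, so C consists of right-to-left minima, and leaves fewer than
   w_l - 1 positions before w_l, so w_l is not one; the lower bound
   i_l >= w_l - s + l places w_l - s before w_l, which with the previous facts
   respects every cover relation of K^alpha_{s,t}. *)

Lemma ltn_nth_sorted {L : seq nat} {m1 m2 : nat} : sorted ltn L ->
  m1 < size L -> m2 < size L -> (nth 0 L m1 < nth 0 L m2) = (m1 < m2).
Proof.
move=> L_sorted lt_m1 lt_m2; apply/idP/idP => [|lt_m12].
  apply: contraLR; rewrite -!leqNgt => le_m21.
  exact: (sorted_leq_nth leq_trans leqnn 0 (sub_sorted ltnW L_sorted)).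
exact: (sorted_ltn_nth ltn_trans 0 L_sorted).
Qed.

Lemma count_lt_nth_sorted {L : seq nat} {m : nat} :
  sorted ltn L -> m < size L -> count (fun x => x < nth 0 L m) L = m.
Proof.
move=> L_sorted lt_m; set pivot := nth 0 L m.
rewrite -(cat_take_drop m L) count_cat.
have size_take_m : size (take m L) = m by rewrite size_takel // ltnW.
rewrite -[RHS]addn0 -[in RHS]size_take_m; congr (_ + _).
- apply/eqP; rewrite -all_count; apply/(all_nthP 0) => i; rewrite size_take_m => lt_im.
  by rewrite /= nth_take // ltn_nth_sorted // (ltn_trans lt_im).
- apply/eqP; rewrite -leqn0 leqNgt -has_count; apply/(has_nthP 0) => -[i].
  rewrite size_drop nth_drop ltn_subRL => lt_mi.
  by rewrite /= ltn_nth_sorted // ltnNge leq_addr.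
Qed.

Definition count_below (P : pred nat) (v : nat) : nat := count P (iota 1 v.-1).

Lemma count_belowS (P : pred nat) v :
  0 < v -> count_below P v.+1 = count_below P v + P v.
Proof.
case: v => // v _.
by rewrite /count_below !succnK -[v.+1]addn1 iotaD count_cat /= addn0 add1n addn1.
Qed.

Lemma count_below_le (P : pred nat) v : count_below P v <= v.-1.
Proof. by rewrite -[leqRHS](size_iota 1 v.-1) count_size. Qed.

Lemma count_belowC (P : pred nat) v :
  count_below P v + count_below (fun x => ~~ P x) v = v.-1.
Proof. by rewrite /count_below count_predC size_iota. Qed.

Lemma leq_count_below (P : pred nat) {u v} :
  u <= v -> count_below P u <= count_below P v.
Proof.
move=> le_uv; rewrite /count_below.
have /subnKC <- : u.-1 <= v.-1 by rewrite -!subn1 leq_sub2r.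
by rewrite iotaD count_cat leq_addr.
Qed.

Lemma count_below_ltn (P : pred nat) u v :
  count_below P u < count_below P v -> u < v.
Proof. by apply: contraLR; rewrite -!leqNgt => /(leq_count_below P). Qed.

Lemma ltn_count_below (P : pred nat) u v :
  0 < u -> P u -> (count_below P u < count_below P v) = (u < v).
Proof.
move=> u_gt0 Pu; apply/idP/idP => [|lt_uv]; first exact: count_below_ltn.
by apply: leq_trans _ (leq_count_below P lt_uv); rewrite count_belowS // Pu addn1.
Qed.

Lemma count_below_memE (L : seq nat) v : uniq L -> all (leq 1) L ->
  count_below (fun x => x \in L) v = count (fun x => x < v) L.
Proof.
move=> L_uniq L_gt0; rewrite /count_below -!size_filter; apply: perm_size.
apply: uniq_perm; rewrite ?filter_uniq ?iota_uniq // => x.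
rewrite !mem_filter mem_iota andbC; have [xL|] := boolP (x \in L); last by rewrite !andbF.
by have := allP L_gt0 x xL; case: v => [|v] /=; lia.
Qed.

Lemma count_below_nth_sorted {L : seq nat} {m : nat} : sorted ltn L -> all (leq 1) L ->
  m < size L -> count_below (fun x => x \in L) (nth 0 L m) = m.
Proof.
move=> L_sorted L_gt0 lt_m.
by rewrite count_below_memE ?(sorted_uniq ltn_trans ltnn) ?count_lt_nth_sorted.
Qed.

Lemma count_below_mem_size (L : seq nat) v : uniq L -> all (fun x => 0 < x < v) L ->
  count_below (fun x => x \in L) v = size L.
Proof.
move=> L_uniq L_range; rewrite count_below_memE //; last first.
  by apply: sub_all L_range => x /andP[].
by apply/eqP; rewrite -all_count; apply: sub_all L_range => x /andP[].
Qed.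

Lemma size_mu_fill W I ps c : size (mu_fill W I ps c) = size ps.
Proof. by elim: ps c => [|p ps IH] c //=; case: ifP => _ /=; rewrite IH. Qed.

Lemma nth_mu_fill W I ps c j : j < size ps ->
  nth 0 (mu_fill W I ps c) j =
  if nth 0 ps j \in I then nth 0 W (index (nth 0 ps j) I)
  else nth 0 c (count (fun p => p \notin I) (take j ps)).
Proof.
elim: ps c j => [|p ps IH] c [|j] //= lt_j; first by case: ifP => _ //=; rewrite -nth0.
by case: ifP => pI /=; rewrite IH //; case: ifP => // _; rewrite nth_behead.
Qed.

Lemma avoids321_of_increasing_classes (pi : seq nat) (c : nat -> bool) :
  (forall a b, a < size pi -> b < size pi -> c a = c b ->
     nth 0 pi a < nth 0 pi b -> a < b) ->
  avoids321 pi.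
Proof.
move=> incr i j k lt_ij lt_jk lt_k [lt_ji lt_kj].
have lt_j := ltn_trans lt_jk lt_k; have lt_i := ltn_trans lt_ij lt_j.
have [cji|cji] := eqVneq (c j) (c i).
  by move: (incr j i lt_j lt_i cji lt_ji); rewrite ltnNge ltnW.
have [ckj|ckj] := eqVneq (c k) (c j).
  by move: (incr k j lt_k lt_j ckj lt_kj); rewrite ltnNge ltnW.
have cki : c k = c i by move: cji ckj; case: (c i) (c j) (c k) => [] [] [].
move: (incr k i lt_k lt_i cki (ltn_trans lt_kj lt_ji)).
by rewrite ltnNge ltnW // (ltn_trans lt_ij).
Qed.

Lemma rl_min_pred_le_pos {sigma : seq nat} {n i : nat} :
  perm_eq sigma (iota 1 n) -> i < size sigma ->
  (forall j, i < j -> j < size sigma -> nth 0 sigma i < nth 0 sigma j) ->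
  (nth 0 sigma i).-1 <= i.
Proof.
move=> sigma_perm lt_i later; set x := nth 0 sigma i.
have below_x_early : {subset iota 1 x.-1 <= take i sigma}.
  move=> y; rewrite mem_iota => y_range.
  have x_range : x \in iota 1 n by rewrite -(perm_mem sigma_perm) mem_nth.
  have y_sigma : y \in sigma.
    by rewrite (perm_mem sigma_perm) mem_iota; move: x_range; rewrite mem_iota; lia.
  have nth_y := nth_index 0 y_sigma; have lt_y := y_sigma; rewrite -index_mem in lt_y.
  case: (ltngtP (index y sigma) i) => [lt_yi|lt_iy|eq_yi].
  - by rewrite -nth_y -(nth_take 0 lt_yi) mem_nth // size_takel // ltnW.
  - by move: (later _ lt_iy lt_y); rewrite nth_y; lia.
  - by move: y_range; rewrite -nth_y eq_yi -/x; lia.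
have := uniq_leq_size (iota_uniq 1 x.-1) below_x_early.
by rewrite size_iota size_takel // ltnW.
Qed.

Section Merge.

Variables (n : nat) (W I : seq nat).
Hypotheses (W_sorted : sorted ltn W) (W_le_n : all (fun w => w <= n) W).
Hypotheses (I_sorted : sorted ltn I) (size_I : size I = size W).
Hypothesis I_gt0 : forall m, m < size W -> 0 < nth 0 I m.
Hypothesis I_lt_W : forall m, m < size W -> nth 0 I m < nth 0 W m.

Local Notation C := [seq x <- iota 1 n | x \notin W].
Local Notation mu := (mu_fill W I (iota 1 n) C).
Local Notation inW := (fun x => x \in W).
Local Notation outW := (fun x => x \notin W).
Local Notation inI := (fun p => p \in I).
Local Notation outI := (fun p => p \notin I).

Let W_gt0 : all (leq 1) W.
Proof.
by apply/(all_nthP 0) => m lt_m; apply: leq_ltn_trans (leq0n _) (I_lt_W _ lt_m).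
Qed.

Let I_range : all (fun i => 0 < i < n.+1) I.
Proof.
apply/(all_nthP 0) => m; rewrite size_I => lt_m; rewrite I_gt0 //=.
by rewrite ltnS (leq_trans (ltnW (I_lt_W _ lt_m))) //; apply: (all_nthP 0 W_le_n).
Qed.

Let rank_W m : m < size W -> count_below inW (nth 0 W m) = m.
Proof. exact: count_below_nth_sorted W_sorted W_gt0. Qed.

Let rank_I m : m < size W -> count_below inI (nth 0 I m) = m.
Proof.
rewrite -size_I; apply: count_below_nth_sorted => //.
by apply: sub_all I_range => i /andP[].
Qed.

Let size_C : size C = n - size W.
Proof.
have W_range : all (fun w => 0 < w < n.+1) W.
  by apply/allP => w wW; rewrite (allP W_gt0) //= ltnS (allP W_le_n).
have := count_belowC inW n.+1.
rewrite count_below_mem_size ?(sorted_uniq ltn_trans ltnn) // size_filter.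
by rewrite /count_below /=; lia.
Qed.

Let rank_C r : r < size C -> count_below outW (nth 0 C r) = r.
Proof.
move=> lt_r; have : nth 0 C r \in C := mem_nth 0 lt_r.
rewrite mem_filter mem_iota => /andP[_ c_range].
have C_sorted : sorted ltn C.
  by apply: sorted_filter; [exact: ltn_trans | exact: iota_ltn_sorted].
have C_gt0 : all (leq 1) C.
  by apply/allP => x; rewrite mem_filter mem_iota => /andP[_ /andP[]].
rewrite -[RHS](count_below_nth_sorted C_sorted C_gt0 lt_r).
apply: eq_in_count => x; rewrite mem_iota mem_filter mem_iota => x_range.
by rewrite /= (_ : 1 <= x < 1 + n) ?andbT //; lia.
Qed.

Lemma size_mu : size mu = n.
Proof. by rewrite size_mu_fill size_iota. Qed.

Lemma nth_mu j : j < n -> nth 0 mu j =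
  if j.+1 \in I then nth 0 W (index j.+1 I) else nth 0 C (count_below outI j.+1).
Proof.
move=> lt_j; rewrite nth_mu_fill ?size_iota // nth_iota // add1n take_iota.
by rewrite (minn_idPl (ltnW lt_j)).
Qed.

Lemma index_I {j} : j.+1 \in I -> exists2 m, m < size W & j.+1 = nth 0 I m.
Proof. by move=> jI; exists (index j.+1 I); rewrite ?nth_index // -size_I index_mem. Qed.

Lemma nth_mu_I {j m} : m < size W -> j.+1 = nth 0 I m -> nth 0 mu j = nth 0 W m.
Proof.
move=> lt_m jI; have I_uniq := sorted_uniq ltn_trans ltnn I_sorted.
have /andP[_ lt_j] : 0 < j.+1 < n.+1 by rewrite jI (allP I_range) // mem_nth ?size_I.
by rewrite nth_mu // jI mem_nth ?index_uniq ?size_I.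
Qed.

Lemma nth_mu_outI {j} : j < n -> j.+1 \notin I ->
  [/\ nth 0 mu j \notin W, 0 < nth 0 mu j <= n
    & count_below outW (nth 0 mu j) = count_below outI j.+1].
Proof.
move=> lt_j jI; rewrite nth_mu // (negbTE jI).
have lt_r : count_below outI j.+1 < size C.
  have := count_belowC inI n.+1.
  rewrite count_below_mem_size ?(sorted_uniq ltn_trans ltnn) ?I_range // size_C -size_I.
  have := leq_count_below outI (lt_j : j.+2 <= n.+1).
  by rewrite count_belowS // jI; lia.
have := mem_nth 0 lt_r; rewrite mem_filter mem_iota add1n ltnS => /andP[-> ->].
by rewrite rank_C.
Qed.

Lemma mem_mu_W {j} : j < n -> (nth 0 mu j \in W) = (j.+1 \in I).
Proof.
move=> lt_j; have [jI|jI] := boolP (j.+1 \in I).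
  by have [m lt_m /nth_mu_I ->] := index_I jI; rewrite ?mem_nth.
by case: (nth_mu_outI lt_j jI) => /negbTE.
Qed.

Lemma mu_range {j} : j < n -> 0 < nth 0 mu j <= n.
Proof.
move=> lt_j; have [jI|jI] := boolP (j.+1 \in I); last by case: (nth_mu_outI lt_j jI).
have [m lt_m /nth_mu_I -> //] := index_I jI.
by rewrite (allP W_gt0) ?(allP W_le_n) ?mem_nth.
Qed.

Lemma mu_mono_class {a b} : a < n -> b < n -> (a.+1 \in I) = (b.+1 \in I) ->
  (nth 0 mu a < nth 0 mu b) = (a < b).
Proof.
move=> lt_a lt_b; have [bI|bI] := boolP (b.+1 \in I) => aI.
  have [m1 lt_m1 am1] := index_I aI; have [m2 lt_m2 bm2] := index_I bI.
  rewrite (nth_mu_I lt_m1 am1) (nth_mu_I lt_m2 bm2) (ltn_nth_sorted W_sorted) //.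
  by rewrite -(ltn_nth_sorted I_sorted) ?size_I // -am1 -bm2 ltnS.
have [caW ca_range ca_rank] := nth_mu_outI lt_a (negbT aI).
have [_ _ cb_rank] := nth_mu_outI lt_b bI.
have ca_gt0 : 0 < nth 0 mu a by case/andP: ca_range.
rewrite -(ltn_count_below outW _ _ ca_gt0 caW) ca_rank cb_rank.
by rewrite ltn_count_below ?ltnS ?aI.
Qed.

Lemma mu_lt_outI {a b} : a < n -> b < n -> b.+1 \notin I ->
  nth 0 mu a < nth 0 mu b -> a < b.
Proof.
move=> lt_a lt_b bI; have [aI|aI] := boolP (a.+1 \in I); last first.
  by rewrite mu_mono_class // (negbTE aI) (negbTE bI).
have [m lt_m am] := index_I aI; rewrite (nth_mu_I lt_m am) => lt_wc.
have [_ _ c_rank] := nth_mu_outI lt_b bI.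
rewrite -ltnS; apply: (count_below_ltn outI).
have rank_a : count_below inI a.+1 = m by rewrite am rank_I.
have := count_belowC inI a.+1; have := count_belowC inW (nth 0 W m).
have := leq_count_below outW (ltnW lt_wc); have := I_lt_W _ lt_m.
by rewrite c_rank rank_a rank_W //; move: am; clear; lia.
Qed.

Lemma mu_inj {a b} : a < n -> b < n -> nth 0 mu a = nth 0 mu b -> a = b.
Proof.
move=> lt_a lt_b eq_ab; have same : (a.+1 \in I) = (b.+1 \in I).
  by rewrite -(mem_mu_W lt_a) -(mem_mu_W lt_b) eq_ab.
apply/eqP; rewrite eqn_leq [a <= b]leqNgt [b <= a]leqNgt.
rewrite -(mu_mono_class lt_b lt_a (esym same)) -(mu_mono_class lt_a lt_b same).
by rewrite eq_ab ltnn.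
Qed.

Lemma mu_perm : perm_eq mu (iota 1 n).
Proof.
have mu_uniq : uniq mu.
  by apply/(uniqP 0) => a b; rewrite !inE size_mu; exact: mu_inj.
have mu_sub : {subset mu <= iota 1 n}.
  move=> x /(nthP 0)[j]; rewrite size_mu => lt_j <-.
  by rewrite mem_iota add1n ltnS mu_range.
have size_le : size (iota 1 n) <= size mu by rewrite size_mu size_iota.
have [_ eq_mu] := uniq_min_size mu_uniq mu_sub size_le.
exact: uniq_perm mu_uniq (iota_uniq 1 n) eq_mu.
Qed.

Lemma mem_mu x : (x \in mu) = (0 < x <= n).
Proof. by rewrite (perm_mem mu_perm) mem_iota add1n ltnS. Qed.

Lemma mu_avoids321 : avoids321 mu.
Proof.
apply: (@avoids321_of_increasing_classes _ (fun j => j.+1 \in I)) => a b.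
by rewrite size_mu => lt_a lt_b same; rewrite mu_mono_class.
Qed.

Lemma mu_rl_minE x : rl_min mu x <-> (0 < x <= n) && (x \notin W).
Proof.
split => [[i [lt_i [<- later]]] | /andP[x_range xW]].
  have lt_in : i < n by rewrite -[X in _ < X]size_mu.
  rewrite mu_range // mem_mu_W //=; apply/negP => iI.
  have [m lt_m im] := index_I iI.
  have := rl_min_pred_le_pos mu_perm lt_i later; rewrite (nth_mu_I lt_m im).
  by move: (I_lt_W _ lt_m); rewrite -im; clear; lia.
have x_mu : x \in mu by rewrite mem_mu.
have lt_x : index x mu < n by rewrite -[X in _ < X]size_mu index_mem.
have xI : (index x mu).+1 \notin I by rewrite -mem_mu_W // nth_index.
exists (index x mu); rewrite index_mem nth_index //; do 2!split=> //; move=> j lt_xj.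
rewrite size_mu => lt_j; rewrite ltnNge leq_eqVlt; apply/negP => /orP[/eqP eq_jx|lt_jx].
  by move: lt_xj; rewrite (mu_inj lt_j lt_x) ?nth_index ?ltnn.
by move: lt_xj; rewrite ltnNge ltnW // (mu_lt_outI lt_j lt_x xI) ?nth_index.
Qed.

Section Shift.

Variable s : nat.
Hypothesis W_gt_s : all (fun w => s < w) W.
Hypothesis I_ge : forall m, m < size W -> nth 0 W m - s + m.+1 <= nth 0 I m.

Lemma mu_lt_shift {a b} : a < n -> a.+1 \notin I -> b.+1 \in I ->
  nth 0 mu a + s = nth 0 mu b -> a < b.
Proof.
move=> lt_a aI bI; have [m lt_m bm] := index_I bI; rewrite (nth_mu_I lt_m bm) => wE.
have [_ /andP[c_gt0 _] c_rank] := nth_mu_outI lt_a aI.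
rewrite -ltnS; apply: (count_below_ltn outI).
have rank_b : count_below inI b.+1 = m by rewrite bm rank_I.
have := count_belowC inI b.+1; have := count_below_le outW (nth 0 mu a).
have := I_ge _ lt_m; rewrite -c_rank rank_b -bm -wE.
by move: c_gt0; clear; lia.
Qed.

Lemma mu_linear_extension t : n = s * t -> 0 < s -> 0 < t -> linear_extension s t mu.
Proof.
move=> n_st s_gt0 t_gt0; split; first by rewrite /is_perm_of -n_st mu_perm.
have s_le_n : s <= n by rewrite n_st leq_pmulr.
suff cover_pos x y : Kcover s t x y -> index x mu < index y mu.
  move=> x y; elim=> {x y} [x y /cover_pos // | x y z _ lt_xy _ lt_yz].
  exact: ltn_trans lt_xy lt_yz.
rewrite /Kcover -n_st => xy.
have [x_range y_range lt_xy] : [/\ 0 < x <= n, 0 < y <= n & x < y].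
  by case/orP: xy => /andP[x_bound /eqP ->]; move: x_bound s_le_n s_gt0;
    clear=> *; split; lia.
have [lt_a xa] : index x mu < n /\ nth 0 mu (index x mu) = x.
  by rewrite -[X in _ < X]size_mu index_mem nth_index // mem_mu.
have [lt_b yb] : index y mu < n /\ nth 0 mu (index y mu) = y.
  by rewrite -[X in _ < X]size_mu index_mem nth_index // mem_mu.
have [bI|bI] := boolP ((index y mu).+1 \in I); last first.
  by rewrite (mu_lt_outI lt_a lt_b) ?xa ?yb.
have s_lt_y : s < y by rewrite (allP W_gt_s) // -yb mem_mu_W.
have {xy} yE : x + s = y.
  by move: s_lt_y; case/orP: xy => /andP[x_bound /eqP ->]; move: x_bound; clear; lia.
have [aI|aI] := boolP ((index x mu).+1 \in I).
  by rewrite -(mu_mono_class lt_a lt_b) ?aI ?bI ?xa ?yb.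
by rewrite (mu_lt_shift lt_a aI bI) ?xa ?yb.
Qed.

End Shift.

End Merge.

Theorem lemma2 (s t : nat) (W I : seq nat) :
  2 <= s -> 2 <= t ->
  sorted ltn W -> all (fun w => s < w <= s * t) W ->
  sorted ltn I -> size I = size W ->
  (forall l, l < size W ->
     nth 0 W l - s + l.+1 <= nth 0 I l <= nth 0 W l - 1) ->
  linear_extension s t (muW s t W I) /\
  avoids321 (muW s t W I) /\
  (forall x, rl_min (muW s t W I) x <-> (1 <= x <= s * t) && (x \notin W)).
Proof.
move=> s_ge2 t_ge2 W_sorted W_range I_sorted size_I I_bounds.
have W_le_n : all (fun w => w <= s * t) W by apply: sub_all W_range => w /andP[].
have W_gt_s : all (fun w => s < w) W by apply: sub_all W_range => w /andP[].
have I_ge m : m < size W -> nth 0 W m - s + m.+1 <= nth 0 I m.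
  by move=> lt_m; case/andP: (I_bounds m lt_m).
have I_gt0 m : m < size W -> 0 < nth 0 I m.
  by move=> lt_m; apply: leq_trans (I_ge m lt_m); rewrite addnS.
have I_lt_W m : m < size W -> nth 0 I m < nth 0 W m.
  move=> lt_m; have /andP[_ le_IW] := I_bounds m lt_m.
  by have /= := allP W_gt_s _ (mem_nth 0 lt_m); move: le_IW; clear; lia.
split; last split.
- by apply: mu_linear_extension => //; exact: ltnW.
- exact: mu_avoids321.
- exact: mu_rl_minE.
Qed.
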